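(* Let $\mathbb{M}(\mathbb{B})=\{F_A:A\in\mathrm{Sp}(1,1)\}$ and $\mathcal{M}(\mathbb{B})=\{\mathcal{F}_A:A\in\mathrm{Sp}(1,1)\}$. The set $\mathbb{M}(\mathbb{B})\cap\mathcal{M}(\mathbb{B})$ is the collection of transformations given by the following actions: (1) the right action of $\mathrm{SO}_0(1,1)$ on $\mathbb{B}$ by classical Möbius transformations, $q\mapsto F_{H}(q)$ for $H\in\mathrm{SO}_0(1,1)$; (2) the right action of $\mathrm{Sp}(1)$ on $\mathbb{B}$ given by $q\cdot u=qu$. That is, $\mathbb{M}(\mathbb{B})\cap\mathcal{M}(\mathbb{B})=\{q\mapsto F_H(q)u: H\in\mathrm{SO}_0(1,1),\ u\in\mathrm{Sp}(1)\}$.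
   Context: $\mathbb{H}$ denotes the quaternions, $\mathbb{B}=\{q\in\mathbb{H}:|q|<1\}$, $\mathrm{Sp}(1)=\{u\in\mathbb{H}:|u|=1\}$. Let $I_{1,1}=\operatorname{diag}(1,-1)$ and $\mathrm{Sp}(1,1)=\{A\in M_2(\mathbb{H}):A^*I_{1,1}A=I_{1,1}\}$. For $t\in\mathbb{R}$, $H(t)=\begin{pmatrix}\cosh t&\sinh t\\ \sinh t&\cosh t\end{pmatrix}$ and $\mathrm{SO}_0(1,1)=\{H(t):t\in\mathbb{R}\}$. For $A=\begin{pmatrix}a&c\\ b&d\end{pmatrix}\in\mathrm{Sp}(1,1)$, the classical Möbius transformation is $F_A(q)=(qc+d)^{-1}(qa+b)$. Slice regular functions on $\mathbb{B}$ are exactly the functions $f(q)=\sum_{n\ge0}q^na_n$ ($a_n\in\mathbb{H}$) with the series converging on $\mathbb{B}$. The $*$-product is $(\sum q^na_n)*(\sum q^nb_n)=\sum_n q^n\sum_{k=0}^n a_kb_{n-k}$; $f^c(q)=\sum q^n\overline{a_n}$, $f^s=f*f^c$, $f^{-*}=(f^s)^{-1}f^c$ (pointwise, off the zero set of $f^s$). For $a,b\in\mathbb{H}$ let $\ell_{a,b}(q)=qa+b$. For $A=\begin{pmatrix}a&c\\ b&d\end{pmatrix}\in\mathrm{Sp}(1,1)$, the regular Möbius transformation is $\mathcal{F}_A=\ell_{c,d}^{-*}*\ell_{a,b}$, which maps $\mathbb{B}$ diffeomorphically onto $\mathbb{B}$. *)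

From Stdlib Require Import Reals Lra List.
Open Scope R_scope.

Record quat : Type := Quat { qr : R; qi : R; qj : R; qk : R }.

Definition qadd (p q : quat) : quat :=
  Quat (qr p + qr q) (qi p + qi q) (qj p + qj q) (qk p + qk q).
Definition qopp (p : quat) : quat := Quat (- qr p) (- qi p) (- qj p) (- qk p).
Definition qsub (p q : quat) : quat := qadd p (qopp q).
(* Hamilton product: i^2 = j^2 = k^2 = ijk = -1 *)
Definition qmul (p q : quat) : quat :=
  Quat (qr p * qr q - qi p * qi q - qj p * qj q - qk p * qk q)
       (qr p * qi q + qi p * qr q + qj p * qk q - qk p * qj q)
       (qr p * qj q - qi p * qk q + qj p * qr q + qk p * qi q)
       (qr p * qk q + qi p * qj q - qj p * qi q + qk p * qr q).
Definition qconj (p : quat) : quat := Quat (qr p) (- qi p) (- qj p) (- qk p).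
Definition qnorm2 (p : quat) : R := qr p ^ 2 + qi p ^ 2 + qj p ^ 2 + qk p ^ 2.
Definition qnorm (p : quat) : R := sqrt (qnorm2 p).
Definition qofR (x : R) : quat := Quat x 0 0 0.
Definition q0 : quat := qofR 0.
Definition q1 : quat := qofR 1.
(** multiplicative inverse p^{-1} = conj p / |p|^2 (the value at 0 is irrelevant) *)
Definition qinv (p : quat) : quat := qmul (qofR (/ qnorm2 p)) (qconj p).
Fixpoint qpow (q : quat) (n : nat) : quat :=
  match n with O => q1 | S m => qmul (qpow q m) q end.

Definition inB (q : quat) : Prop := qnorm q < 1.
Definition inSp1 (u : quat) : Prop := qnorm u = 1.

(** * Sp(1,1).  A matrix A = [[a, c], [b, d]] in M_2(H) is represented by its
    four entries.  A^* = [[conj a, conj b], [conj c, conj d]], and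
    A^* I_{1,1} A = I_{1,1} written entrywise. *)
Definition inSp11 (a b c d : quat) : Prop :=
  qsub (qmul (qconj a) a) (qmul (qconj b) b) = q1 /\
  qsub (qmul (qconj a) c) (qmul (qconj b) d) = q0 /\
  qsub (qmul (qconj c) a) (qmul (qconj d) b) = q0 /\
  qsub (qmul (qconj c) c) (qmul (qconj d) d) = qopp q1.

Definition mobF (a b c d : quat) (q : quat) : quat :=
  qmul (qinv (qadd (qmul q c) d)) (qadd (qmul q a) b).

Definition mobH (t : R) (q : quat) : quat :=
  mobF (qofR (cosh t)) (qofR (sinh t)) (qofR (sinh t)) (qofR (cosh t)) q.

Fixpoint psum (a : nat -> quat) (q : quat) (N : nat) : quat :=
  match N with O => q0 | S M => qadd (psum a q M) (qmul (qpow q M) (a M)) end.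

Definition series_to (a : nat -> quat) (q L : quat) : Prop :=
  Un_cv (fun N => qnorm (qsub (psum a q N) L)) 0.

Fixpoint qsum (f : nat -> quat) (n : nat) : quat :=
  match n with O => q0 | S m => qadd (qsum f m) (f m) end.

Definition star (a b : nat -> quat) : nat -> quat :=
  fun n => qsum (fun k => qmul (a k) (b (n - k)%nat)) (S n).

Definition cconj (a : nat -> quat) : nat -> quat := fun n => qconj (a n).

(** coefficients of l_{a,b}(q) = q a + b *)
Definition lin (a b : quat) : nat -> quat :=
  fun n => match n with O => b | S O => a | _ => q0 end.

Definition lin_s (c d : quat) : nat -> quat := star (lin c d) (cconj (lin c d)).

(** l_{c,d}^{-*}(q) = (l^s(q))^{-1} l^c(q), pointwise.  Since l^s has degree <= 2
    and l^c degree <= 1, their values are the finite sums with 3 resp. 2 terms. *)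
Definition lin_sinv (c d : quat) (q : quat) : quat :=
  qmul (qinv (psum (lin_s c d) q 3)) (psum (cconj (lin c d)) q 2).

Definition in_classical_Mob (f : quat -> quat) : Prop :=
  exists a b c d, inSp11 a b c d /\ forall q, inB q -> f q = mobF a b c d q.

(** The *-product is taken on coefficient sequences: alpha is the power series
    expansion on B of the slice regular function l_{c,d}^{-*}, and calF_A is the
    sum on B of the series with coefficients alpha * (coefficients of l_{a,b}). *)
Definition in_regular_Mob (f : quat -> quat) : Prop :=
  exists a b c d, inSp11 a b c d /\
    exists alpha : nat -> quat,
      (forall q, inB q -> series_to alpha q (lin_sinv c d q)) /\
      (forall q, inB q -> series_to (star alpha (lin a b)) q (f q)).

From Stdlib Require Import Reals Lra Lia Psatz.
Open Scope R_scope.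

(* A power series f(q) = sum q^n a_n is affine on every sphere x + yS inside
   the ball: since q^2 = 2 Re(q) q - |q|^2, each q^n is a real-affine function
   of q whose coefficients depend only on Re q and |q|, so
   f(x + yI) = P + (x + yI) Q for every imaginary unit I.
   If moreover f = F_A, clearing the denominator of F_A at the points +-I/2 for
   I = i, j, k shows that I c I Q and I d I Q do not depend on I, while Q <> 0
   because |a|^2 - |b|^2 = 1; hence c and d are real.  The Sp(1,1) relations
   then give b = w a with w = c/d in (-1, 1) and |a| = |d|, so that
   F_A(q) = F_{H(t)}(q) a/d with tanh t = w.
   Conversely, for a = cosh t u, b = sinh t u, c = sinh t, d = cosh t the
   function l_{c,d} has real coefficients, so l_{c,d}^{-*} = l_{c,d}^{-1} is a
   geometric series and l_{c,d}^{-*} * l_{a,b} = F_A = F_{H(t)} u. *)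

(** * Quaternion algebra *)

Lemma quat_ext p q :
  qr p = qr q -> qi p = qi q -> qj p = qj q -> qk p = qk q -> p = q.
Proof. destruct p, q; simpl; intros; subst; reflexivity. Qed.

Ltac qring := apply quat_ext; simpl; ring.

Lemma qmul_assoc p q r : qmul p (qmul q r) = qmul (qmul p q) r.
Proof. qring. Qed.

Lemma qmul_1l p : qmul q1 p = p.
Proof. qring. Qed.

Lemma qmul_1r p : qmul p q1 = p.
Proof. qring. Qed.

Lemma qnorm2_mul p q : qnorm2 (qmul p q) = qnorm2 p * qnorm2 q.
Proof. unfold qnorm2; simpl; ring. Qed.

Lemma qnorm2_opp p : qnorm2 (qopp p) = qnorm2 p.
Proof. unfold qnorm2; simpl; ring. Qed.

Lemma qnorm2_ge0 p : 0 <= qnorm2 p.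
Proof. unfold qnorm2; nra. Qed.

Lemma qnorm2_eq0 p : qnorm2 p = 0 -> p = q0.
Proof.
  destruct p as [x y z w]; unfold qnorm2; simpl; intros H.
  apply quat_ext; simpl; nra.
Qed.

Lemma qnorm2_pos p : p <> q0 -> 0 < qnorm2 p.
Proof.
  intros Hp; destruct (qnorm2_ge0 p) as [|E]; [assumption|].
  exfalso; apply Hp, qnorm2_eq0; auto.
Qed.

Lemma qmul_eq0 p q : qmul p q = q0 -> p = q0 \/ q = q0.
Proof.
  intros H.
  assert (N : qnorm2 p * qnorm2 q = 0)
    by (rewrite <- qnorm2_mul, H; unfold qnorm2; simpl; ring).
  destruct (Rmult_integral _ _ N); [left | right]; apply qnorm2_eq0; assumption.
Qed.

Lemma qmul_cancel_l p q q' : p <> q0 -> qmul p q = qmul p q' -> q = q'.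
Proof.
  intros Hp E.
  assert (D : qmul p (qsub q q') = q0)
    by (transitivity (qsub (qmul p q) (qmul p q')); [qring | rewrite E; qring]).
  destruct (qmul_eq0 _ _ D) as [|Z]; [contradiction|].
  transitivity (qadd (qsub q q') q'); [qring | rewrite Z; qring].
Qed.

Lemma qmul_cancel_r p p' q : q <> q0 -> qmul p q = qmul p' q -> p = p'.
Proof.
  intros Hq E.
  assert (D : qmul (qsub p p') q = q0)
    by (transitivity (qsub (qmul p q) (qmul p' q)); [qring | rewrite E; qring]).
  destruct (qmul_eq0 _ _ D) as [Z|]; [|contradiction].
  transitivity (qadd (qsub p p') p'); [qring | rewrite Z; qring].
Qed.

Lemma qofR_neq0 k : k <> 0 -> qofR k <> q0.
Proof. intros Hk E; apply Hk; exact (f_equal qr E). Qed.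

Lemma qinv_l p : p <> q0 -> qmul (qinv p) p = q1.
Proof.
  intros Hp; pose proof (qnorm2_pos p Hp) as N.
  unfold qinv, qnorm2 in *; destruct p as [x y z w]; simpl in *.
  apply quat_ext; simpl; field; lra.
Qed.

Lemma qinv_r p : p <> q0 -> qmul p (qinv p) = q1.
Proof.
  intros Hp; pose proof (qnorm2_pos p Hp) as N.
  unfold qinv, qnorm2 in *; destruct p as [x y z w]; simpl in *.
  apply quat_ext; simpl; field; lra.
Qed.

Lemma qinv_unique l p : qmul l p = q1 -> l = qinv p.
Proof.
  intros H.
  assert (Hp : p <> q0).
  { intros ->; pose proof (f_equal qr H) as E; simpl in E; lra. }
  rewrite <- (qmul_1r l), <- (qinv_r p Hp), qmul_assoc, H; apply qmul_1l.
Qed.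

Lemma qinv_scal k p : k <> 0 -> qinv (qmul (qofR k) p) = qmul (qofR (/ k)) (qinv p).
Proof.
  intros Hk; unfold qinv.
  rewrite qnorm2_mul; replace (qnorm2 (qofR k)) with (k * k)
    by (unfold qnorm2; simpl; ring).
  rewrite Rinv_mult; set (iN := / qnorm2 p).
  apply quat_ext; simpl; field; assumption.
Qed.

Lemma inB_norm2 q : inB q <-> qnorm2 q < 1.
Proof.
  unfold inB, qnorm; split; intros H.
  - rewrite <- sqrt_1 in H; apply sqrt_lt_0_alt, H.
  - rewrite <- sqrt_1; apply sqrt_lt_1_alt; split; [apply qnorm2_ge0 | exact H].
Qed.

Lemma inSp1_norm2 u : inSp1 u <-> qnorm2 u = 1.
Proof.
  unfold inSp1, qnorm; split; intros H.
  - rewrite <- (sqrt_sqrt (qnorm2 u)) by apply qnorm2_ge0; rewrite H; ring.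
  - rewrite H; apply sqrt_1.
Qed.

Lemma Sp11_norms a b c d :
  inSp11 a b c d -> qnorm2 a - qnorm2 b = 1 /\ qnorm2 c - qnorm2 d = -1.
Proof.
  intros [Ha [_ [_ Hc]]]; apply (f_equal qr) in Ha; apply (f_equal qr) in Hc.
  unfold qnorm2; simpl in *; split; lra.
Qed.

Lemma lin_neq0 c d q : qnorm2 c < qnorm2 d -> inB q -> qadd (qmul q c) d <> q0.
Proof.
  intros Hcd Bq E; apply inB_norm2 in Bq.
  assert (Ed : d = qopp (qmul q c))
    by (transitivity (qsub (qadd (qmul q c) d) (qmul q c)); [qring | rewrite E; qring]).
  rewrite Ed, qnorm2_opp, qnorm2_mul in Hcd.
  pose proof (qnorm2_ge0 c); nra.
Qed.

Lemma mobF_spec a b c d q :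
  qadd (qmul q c) d <> q0 ->
  qmul (qadd (qmul q c) d) (mobF a b c d q) = qadd (qmul q a) b.
Proof.
  intros H; unfold mobF; rewrite qmul_assoc, qinv_r by exact H; apply qmul_1l.
Qed.

Lemma mobF_mulr a b c d q u :
  qmul (mobF a b c d q) u = mobF (qmul a u) (qmul b u) c d q.
Proof. unfold mobF; set (Y := qinv _); clearbody Y; qring. Qed.

Lemma mobF_scal k a b c d q : k <> 0 ->
  mobF (qmul (qofR k) a) (qmul (qofR k) b) (qmul (qofR k) c) (qmul (qofR k) d) q
  = mobF a b c d q.
Proof.
  intros Hk; unfold mobF.
  replace (qadd (qmul q (qmul (qofR k) c)) (qmul (qofR k) d))
    with (qmul (qofR k) (qadd (qmul q c) d)) by qring.
  rewrite qinv_scal by exact Hk; set (Y := qinv _); clearbody Y.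
  apply quat_ext; simpl; field; exact Hk.
Qed.

(** * Convergence of quaternion sequences and series *)

Lemma Un_cv_ext u v l : (forall n, u n = v n) -> Un_cv u l -> Un_cv v l.
Proof.
  intros E H eps Heps; destruct (H eps Heps) as [N HN].
  exists N; intros n Hn; rewrite <- E; auto.
Qed.

Lemma Un_cv_const c : Un_cv (fun _ => c) c.
Proof.
  intros eps Heps; exists O; intros.
  unfold R_dist; rewrite Rminus_diag, Rabs_R0; lra.
Qed.

Lemma Un_cv_opp u l : Un_cv u l -> Un_cv (fun n => - u n) (- l).
Proof.
  intros H eps Heps; destruct (H eps Heps) as [N HN]; exists N; intros n Hn.
  unfold R_dist in *; replace (- u n - - l) with (- (u n - l)) by ring.
  rewrite Rabs_Ropp; auto.
Qed.

Lemma Un_cv_S u l : Un_cv (fun n => u (S n)) l <-> Un_cv u l.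
Proof.
  split; intros H eps Heps; destruct (H eps Heps) as [N HN].
  - exists (S N); intros [|n] Hn; [lia | apply HN; lia].
  - exists N; intros n Hn; apply HN; lia.
Qed.

Lemma Un_cv_sqr_le_geom u rho :
  0 <= rho < 1 -> (forall n, u n * u n <= rho ^ n) -> Un_cv u 0.
Proof.
  intros Hr Hu eps Heps.
  destruct (pow_lt_1_zero rho ltac:(rewrite Rabs_pos_eq; lra) (eps * eps)
              ltac:(nra)) as [N HN].
  exists N; intros n Hn; specialize (HN n Hn); specialize (Hu n).
  rewrite Rabs_pos_eq in HN by (apply pow_le; lra).
  unfold R_dist; rewrite Rminus_0_r.
  destruct (Rcase_abs (u n)); [rewrite Rabs_left | rewrite Rabs_pos_eq]; nra.
Qed.

Definition qcv (s : nat -> quat) (L : quat) : Prop :=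
  Un_cv (fun n => qr (s n)) (qr L) /\ Un_cv (fun n => qi (s n)) (qi L) /\
  Un_cv (fun n => qj (s n)) (qj L) /\ Un_cv (fun n => qk (s n)) (qk L).

Ltac Un_cv_auto :=
  repeat first [ assumption | apply Un_cv_const | apply CV_minus | apply CV_plus
               | apply CV_mult | apply Un_cv_opp ].

Lemma qcv_ext s t L : (forall n, s n = t n) -> qcv s L -> qcv t L.
Proof.
  intros E (H1 & H2 & H3 & H4);
    repeat split; eapply Un_cv_ext; try eassumption; intros n; simpl; rewrite E; reflexivity.
Qed.

Lemma qcv_unique s L L' : qcv s L -> qcv s L' -> L = L'.
Proof.
  intros (H1 & H2 & H3 & H4) (H1' & H2' & H3' & H4').
  apply quat_ext; eapply UL_sequence; eassumption.
Qed.

Lemma qcv_const c : qcv (fun _ => c) c.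
Proof. repeat split; apply Un_cv_const. Qed.

Lemma qcv_add s t L M :
  qcv s L -> qcv t M -> qcv (fun n => qadd (s n) (t n)) (qadd L M).
Proof. intros (? & ? & ? & ?) (? & ? & ? & ?); repeat split; simpl; Un_cv_auto. Qed.

Lemma qcv_sub s t L M :
  qcv s L -> qcv t M -> qcv (fun n => qsub (s n) (t n)) (qsub L M).
Proof. intros (? & ? & ? & ?) (? & ? & ? & ?); repeat split; simpl; Un_cv_auto. Qed.

Lemma qcv_mul s t L M :
  qcv s L -> qcv t M -> qcv (fun n => qmul (s n) (t n)) (qmul L M).
Proof. intros (? & ? & ? & ?) (? & ? & ? & ?); repeat split; simpl; Un_cv_auto. Qed.

Lemma qcv_S s L : qcv (fun n => s (S n)) L <-> qcv s L.
Proof.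
  unfold qcv; rewrite !(Un_cv_S (fun n => _ (s n))); tauto.
Qed.

Lemma qnorm2_pow z n : qnorm2 (qpow z n) = qnorm2 z ^ n.
Proof. induction n; simpl; [unfold qnorm2; simpl; ring | rewrite qnorm2_mul, IHn; ring]. Qed.

Lemma qcv_pow0 z : qnorm2 z < 1 -> qcv (qpow z) q0.
Proof.
  intros Hz; pose proof (qnorm2_ge0 z).
  repeat split; apply (Un_cv_sqr_le_geom _ (qnorm2 z)); try lra; intros n;
    rewrite <- qnorm2_pow; unfold qnorm2; set (p := qpow z n); nra.
Qed.

Lemma qnorm_ge_Rabs_parts p :
  Rabs (qr p) <= qnorm p /\ Rabs (qi p) <= qnorm p /\
  Rabs (qj p) <= qnorm p /\ Rabs (qk p) <= qnorm p.
Proof.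
  unfold qnorm, qnorm2; repeat split;
    rewrite <- sqrt_Rsqr_abs; apply sqrt_le_1_alt; unfold Rsqr; nra.
Qed.

Lemma Un_cv_dominated u v l :
  (forall n, Rabs (u n - l) <= v n) -> Un_cv v 0 -> Un_cv u l.
Proof.
  intros Hle Hv eps Heps; destruct (Hv eps Heps) as [N HN]; exists N; intros n Hn.
  specialize (HN n Hn); unfold R_dist in *; rewrite Rminus_0_r in HN.
  pose proof (Hle n); pose proof (Rle_abs (v n)); lra.
Qed.

Lemma series_to_qcv b q L : series_to b q L <-> qcv (psum b q) L.
Proof.
  unfold series_to; split.
  - intros H; repeat split; (eapply Un_cv_dominated; [|exact H]); intros n;
      destruct (qnorm_ge_Rabs_parts (qsub (psum b q n) L)) as (? & ? & ? & ?);
      simpl in *; assumption.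
  - intros H; pose proof (qcv_sub _ _ _ _ H (qcv_const L)) as (H1 & H2 & H3 & H4).
    unfold qnorm, qnorm2; rewrite <- sqrt_0.
    apply continuity_seq; [apply continuity_pt_sqrt; lra|].
    replace 0 with (qr (qsub L L) ^ 2 + qi (qsub L L) ^ 2 + qj (qsub L L) ^ 2
                    + qk (qsub L L) ^ 2) by (simpl; ring).
    Un_cv_auto; simpl; rewrite Rmult_1_r; Un_cv_auto.
Qed.

(** * Power series on spheres *)

Lemma qmul_self q : qmul q q = qsub (qmul (qofR (2 * qr q)) q) (qofR (qnorm2 q)).
Proof. unfold qnorm2; qring. Qed.

Lemma qpow_on_sphere x m n : exists A B : R, forall q, qr q = x -> qnorm2 q = m ->
  qpow q n = qadd (qofR A) (qmul (qofR B) q).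
Proof.
  induction n as [|n (A & B & IH)].
  - exists 1, 0; intros; qring.
  - exists (- B * m), (A + 2 * B * x); intros q Hx Hm; simpl; rewrite IH by assumption.
    transitivity (qadd (qmul (qofR A) q) (qmul (qofR B) (qmul q q))); [qring|].
    rewrite qmul_self, Hx, Hm; qring.
Qed.

Lemma psum_on_sphere b x m N : exists P Q, forall q, qr q = x -> qnorm2 q = m ->
  psum b q N = qadd P (qmul q Q).
Proof.
  induction N as [|N (P & Q & IH)].
  - exists q0, q0; intros; qring.
  - destruct (qpow_on_sphere x m N) as (A & B & HAB).
    exists (qadd P (qmul (qofR A) (b N))), (qadd Q (qmul (qofR B) (b N))).
    intros q Hx Hm; simpl; rewrite IH, HAB by assumption; qring.
Qed.

Definition sphere_interp (q q' X Y : quat) : quat :=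
  qadd X (qmul (qsub q' q) (qmul (qinv (qsub q (qconj q))) (qsub X Y))).

Lemma sphere_interp_affine q q' P Q : qsub q (qconj q) <> q0 ->
  sphere_interp q q' (qadd P (qmul q Q)) (qadd P (qmul (qconj q) Q))
  = qadd P (qmul q' Q).
Proof.
  intros Hq; unfold sphere_interp.
  replace (qsub (qadd P (qmul q Q)) (qadd P (qmul (qconj q) Q)))
    with (qmul (qsub q (qconj q)) Q) by qring.
  rewrite (qmul_assoc (qinv _)), qinv_l, qmul_1l by exact Hq; qring.
Qed.

Lemma series_representation_formula b f q q' :
  (forall z, inB z -> series_to b z (f z)) -> inB q -> qsub q (qconj q) <> q0 ->
  qr q' = qr q -> qnorm2 q' = qnorm2 q ->
  f q' = sphere_interp q q' (f q) (f (qconj q)).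
Proof.
  intros Hs Bq Hq Hx Hm.
  assert (Hm' : qnorm2 (qconj q) = qnorm2 q) by (unfold qnorm2; simpl; ring).
  assert (Bq' : inB q') by (apply inB_norm2; rewrite Hm; apply inB_norm2, Bq).
  assert (Bc : inB (qconj q)) by (apply inB_norm2; rewrite Hm'; apply inB_norm2, Bq).
  apply (qcv_unique (psum b q')); [apply series_to_qcv, Hs, Bq'|].
  apply (qcv_ext (fun N => sphere_interp q q' (psum b q N) (psum b (qconj q) N))).
  { intros N; destruct (psum_on_sphere b (qr q) (qnorm2 q) N) as (P & Q & HPQ).
    rewrite (HPQ q), (HPQ (qconj q)), (HPQ q') by auto.
    apply sphere_interp_affine, Hq. }
  apply qcv_add; [|apply qcv_mul; [apply qcv_const|]; apply qcv_mul;
                   [apply qcv_const | apply qcv_sub]];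
    apply series_to_qcv, Hs; assumption.
Qed.

Lemma series_affine_on_sphere b f q :
  (forall z, inB z -> series_to b z (f z)) -> inB q -> qsub q (qconj q) <> q0 ->
  exists P Q, forall q', qr q' = qr q -> qnorm2 q' = qnorm2 q ->
    f q' = qadd P (qmul q' Q).
Proof.
  intros Hs Bq Hq.
  set (Q := qmul (qinv (qsub q (qconj q))) (qsub (f q) (f (qconj q)))).
  exists (qsub (f q) (qmul q Q)), Q; intros q' Hx Hm.
  rewrite (series_representation_formula b f q q') by assumption.
  unfold sphere_interp; fold Q; clearbody Q; qring.
Qed.

(** * Classical Moebius maps that are power series *)

Definition ui : quat := Quat 0 1 0 0.
Definition uj : quat := Quat 0 0 1 0.
Definition uk : quat := Quat 0 0 0 1.

Lemma qreal_of_sandwich w :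
  qmul ui (qmul w ui) = qmul uj (qmul w uj) ->
  qmul ui (qmul w ui) = qmul uk (qmul w uk) -> w = qofR (qr w).
Proof.
  intros Ej Ek.
  pose proof (f_equal qi Ej); pose proof (f_equal qj Ej); pose proof (f_equal qk Ek).
  unfold ui, uj, uk in *; simpl in *; apply quat_ext; simpl; lra.
Qed.

Definition mob_affine_eq (a b c d P Q z : quat) : Prop :=
  qmul (qadd (qmul z c) d) (qadd P (qmul z Q)) = qadd (qmul z a) b.

Lemma slice_pair_eqs y I a b c d P Q : y <> 0 ->
  mob_affine_eq a b c d P Q (qmul (qofR y) I) ->
  mob_affine_eq a b c d P Q (qmul (qofR y) (qopp I)) ->
  qmul (qofR (y * y)) (qmul I (qmul c (qmul I Q))) = qsub b (qmul d P) /\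
  qmul d (qmul I Q) = qmul I (qsub a (qmul c P)).
Proof.
  unfold mob_affine_eq; intros Hy Ep Em.
  pose proof (f_equal qr Ep); pose proof (f_equal qi Ep);
  pose proof (f_equal qj Ep); pose proof (f_equal qk Ep);
  pose proof (f_equal qr Em); pose proof (f_equal qi Em);
  pose proof (f_equal qj Em); pose proof (f_equal qk Em).
  simpl in *; split; apply quat_ext; simpl.
  1-4: lra.
  all: apply (Rmult_eq_reg_l y); [lra | exact Hy].
Qed.

Lemma real_cd_of_slice_eqs y a b c d P Q : y <> 0 ->
  qnorm2 a - qnorm2 b = 1 -> qnorm2 c - qnorm2 d = -1 ->
  (forall I, I = ui \/ I = uj \/ I = uk ->
     qmul (qofR (y * y)) (qmul I (qmul c (qmul I Q))) = qsub b (qmul d P) /\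
     qmul d (qmul I Q) = qmul I (qsub a (qmul c P))) ->
  c = qofR (qr c) /\ d = qofR (qr d).
Proof.
  intros Hy Nab Ncd H.
  destruct (H ui (or_introl eq_refl)) as [Ei Oi].
  destruct (H uj (or_intror (or_introl eq_refl))) as [Ej Oj].
  destruct (H uk (or_intror (or_intror eq_refl))) as [Ek Ok].
  assert (HQ : Q <> q0).
  { intros ->.
    assert (Ea : a = qmul c P).
    { assert (Z : qmul ui (qsub a (qmul c P)) = q0) by (rewrite <- Oi; qring).
      destruct (qmul_eq0 _ _ Z) as [Z' | Z'].
      - apply (f_equal qi) in Z'; simpl in Z'; lra.
      - transitivity (qadd (qsub a (qmul c P)) (qmul c P)); [qring | rewrite Z'; qring]. }
    assert (Eb : b = qmul d P).
    { transitivity (qadd (qsub b (qmul d P)) (qmul d P)); [qring|].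
      rewrite <- Ei; qring. }
    rewrite Ea, Eb, !qnorm2_mul in Nab; pose proof (qnorm2_ge0 P); nra. }
  split; apply qreal_of_sandwich; apply (qmul_cancel_r _ _ Q HQ).
  - apply (qmul_cancel_l (qofR (y * y))); [apply qofR_neq0; nra|].
    rewrite <- !qmul_assoc, Ei, Ej; reflexivity.
  - apply (qmul_cancel_l (qofR (y * y))); [apply qofR_neq0; nra|].
    rewrite <- !qmul_assoc, Ei, Ek; reflexivity.
  - rewrite <- !qmul_assoc, Oi, Oj; qring.
  - rewrite <- !qmul_assoc, Oi, Ok; qring.
Qed.

Lemma mobF_regular_real_cd a b c d beta : inSp11 a b c d ->
  (forall z, inB z -> series_to beta z (mobF a b c d z)) ->
  c = qofR (qr c) /\ d = qofR (qr d).
Proof.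
  intros HA Hs; destruct (Sp11_norms _ _ _ _ HA) as [Nab Ncd].
  set (y := / 2); set (q := qmul (qofR y) ui).
  destruct (series_affine_on_sphere beta _ q Hs) as (P & Q & HPQ).
  { apply inB_norm2; unfold q, y, qnorm2; simpl; lra. }
  { unfold q, y; intros E; apply (f_equal qi) in E; simpl in E; lra. }
  assert (Hslice : forall I, qr I = 0 -> qnorm2 I = 1 ->
                     mob_affine_eq a b c d P Q (qmul (qofR y) I)).
  { intros I H0 H1.
    assert (Hm : qnorm2 (qmul (qofR y) I) = qnorm2 q)
      by (rewrite qnorm2_mul, H1; unfold q, y, qnorm2; simpl; field).
    assert (Bz : inB (qmul (qofR y) I))
      by (apply inB_norm2; rewrite Hm; unfold q, y, qnorm2; simpl; lra).
    unfold mob_affine_eq; rewrite <- HPQ.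
    - apply mobF_spec, lin_neq0; [lra | exact Bz].
    - simpl; rewrite H0; unfold q; simpl; ring.
    - exact Hm. }
  apply (real_cd_of_slice_eqs y a b c d P Q); try assumption; [unfold y; lra|].
  intros I HI; apply slice_pair_eqs; [unfold y; lra | |]; apply Hslice;
    destruct HI as [-> | [-> | ->]]; unfold ui, uj, uk, qnorm2; simpl; ring.
Qed.

Lemma cosh_pos t : 0 < cosh t.
Proof. unfold cosh; pose proof (exp_pos t); pose proof (exp_pos (- t)); lra. Qed.

Lemma cosh_sqr_sub_sinh_sqr t : cosh t * cosh t - sinh t * sinh t = 1.
Proof. unfold cosh, sinh; rewrite exp_Ropp; pose proof (exp_pos t); field; lra. Qed.

Lemma tanh_surj w : -1 < w < 1 -> exists t, sinh t = w * cosh t.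
Proof.
  intros Hw; set (t := ln ((1 + w) / (1 - w)) / 2); exists t.
  assert (E2 : exp t * exp t = (1 + w) / (1 - w)).
  { rewrite <- exp_plus; replace (t + t) with (ln ((1 + w) / (1 - w))) by (unfold t; field).
    apply exp_ln, Rdiv_lt_0_compat; lra. }
  unfold sinh, cosh; rewrite exp_Ropp; pose proof (exp_pos t).
  set (E := exp t) in *; apply (Rmult_eq_reg_l (2 * E)); [|lra].
  field_simplify; [|lra | lra].
  assert (E * E * (1 - w) = 1 + w) by (rewrite E2; field; lra).
  nra.
Qed.

Lemma mobF_Sp11_real_cd a b c0 d0 : inSp11 a b (qofR c0) (qofR d0) ->
  exists t u, inSp1 u /\
    forall q, mobF a b (qofR c0) (qofR d0) q = qmul (mobH t q) u.
Proof.
  intros HA; destruct (Sp11_norms _ _ _ _ HA) as [Nab Ncd]; destruct HA as (_ & H2 & _).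
  unfold qnorm2 in Ncd; simpl in Ncd.
  assert (Hd0 : d0 <> 0) by (intros ->; nra).
  set (w := c0 / d0).
  assert (Ec0 : c0 = w * d0) by (unfold w; field; exact Hd0).
  clearbody w.
  assert (Eb : b = qmul (qofR w) a).
  { rewrite Ec0 in H2.
    apply quat_ext; [apply (f_equal qr) in H2 | apply (f_equal qi) in H2
                    | apply (f_equal qj) in H2 | apply (f_equal qk) in H2];
      simpl in *; apply (Rmult_eq_reg_l d0); try exact Hd0; lra. }
  assert (Kd : d0 * d0 * (1 - w * w) = 1) by (rewrite Ec0 in Ncd; lra).
  assert (Ka : qnorm2 a * (1 - w * w) = 1).
  { rewrite Eb, qnorm2_mul in Nab; unfold qnorm2 at 2 in Nab; simpl in Nab; lra. }
  assert (Hww : 0 < 1 - w * w) by (pose proof (Rle_0_sqr d0); unfold Rsqr in *; nra).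
  assert (Hw : -1 < w < 1) by (clear - Hww; split; nra).
  assert (Na : qnorm2 a = d0 * d0) by (apply (Rmult_eq_reg_r (1 - w * w)); lra).
  destruct (tanh_surj w Hw) as [t Ht]; pose proof (cosh_pos t) as Hch.
  set (u := qmul (qofR (/ d0)) a).
  exists t, u; split.
  { apply inSp1_norm2; unfold u; rewrite qnorm2_mul, Na; unfold qnorm2; simpl.
    field; exact Hd0. }
  intros q; unfold mobH; rewrite mobF_mulr.
  (* both sides are real multiples of the matrix [[u, w], [w u, 1]] *)
  transitivity (mobF u (qmul (qofR w) u) (qofR w) q1 q).
  - rewrite <- (mobF_scal d0 u (qmul (qofR w) u) (qofR w) q1) by exact Hd0; rewrite Eb, Ec0.
    f_equal; unfold u; apply quat_ext; simpl; field; exact Hd0.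
  - rewrite <- (mobF_scal (cosh t) u (qmul (qofR w) u) (qofR w) q1) by lra; rewrite Ht.
    f_equal; unfold u; apply quat_ext; simpl; field; exact Hd0.
Qed.

(** * Power series expansion of q |-> F_{H(t)}(q) u *)

Lemma qpow_scal q r n : qpow (qmul q (qofR r)) n = qmul (qpow q n) (qofR (r ^ n)).
Proof. induction n; simpl; [|rewrite IHn]; qring. Qed.

Lemma qpow_comm q n : qmul q (qpow q n) = qmul (qpow q n) q.
Proof. induction n; simpl; [qring | rewrite qmul_assoc, IHn; reflexivity]. Qed.

Lemma series_inv_lin_real c0 d0 q : c0 * c0 < d0 * d0 -> inB q ->
  series_to (fun n => qofR ((- c0 / d0) ^ n / d0)) q
            (qinv (qadd (qmul q (qofR c0)) (qofR d0))).
Proof.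
  intros Hcd Bq; assert (Hd : d0 <> 0) by (intros ->; nra).
  set (X := qadd (qmul q (qofR c0)) (qofR d0)).
  assert (HX : X <> q0) by (apply lin_neq0; [unfold qnorm2; simpl; nra | exact Bq]).
  set (r := - c0 / d0).
  assert (Hpsum : forall N, psum (fun n => qofR (r ^ n / d0)) q N
                            = qmul (qsub q1 (qpow (qmul q (qofR r)) N)) (qinv X)).
  { intros N; apply (qmul_cancel_r _ _ X HX).
    rewrite <- qmul_assoc, qinv_l, qmul_1r by exact HX.
    induction N as [|N IH]; [qring|].
    transitivity (qadd (qmul (psum (fun n => qofR (r ^ n / d0)) q N) X)
                       (qmul (qmul (qpow q N) (qofR (r ^ N / d0))) X)); [qring|].
    rewrite IH; cbn [qpow]; rewrite qpow_scal.
    unfold X, r; set (Q := qpow q N); set (rN := (- c0 / d0) ^ N); clearbody Q rN.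
    apply quat_ext; simpl; field; exact Hd. }
  assert (Hr : qnorm2 (qmul q (qofR r)) < 1).
  { rewrite qnorm2_mul; apply inB_norm2 in Bq; pose proof (qnorm2_ge0 q).
    assert (r * r < 1).
    { assert (E : r * r * (d0 * d0) = c0 * c0) by (unfold r; field; exact Hd).
      assert (0 < d0 * d0) by nra; nra. }
    unfold qnorm2 at 2; simpl; nra. }
  assert (L : qcv (fun N => qmul (qsub q1 (qpow (qmul q (qofR r)) N)) (qinv X))
                  (qmul (qsub q1 q0) (qinv X)))
    by (apply qcv_mul; [apply qcv_sub; [apply qcv_const | apply qcv_pow0, Hr]
                       | apply qcv_const]).
  replace (qmul (qsub q1 q0) (qinv X)) with (qinv X) in L
    by (set (Y := qinv X); clearbody Y; qring).
  apply series_to_qcv, (qcv_ext _ _ _ (fun N => eq_sym (Hpsum N))), L.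
Qed.

Lemma lin_sinv_real c0 d0 q : qadd (qmul q (qofR c0)) (qofR d0) <> q0 ->
  lin_sinv (qofR c0) (qofR d0) q = qinv (qadd (qmul q (qofR c0)) (qofR d0)).
Proof.
  intros HX; set (X := qadd (qmul q (qofR c0)) (qofR d0)) in *.
  unfold lin_sinv.
  replace (psum (lin_s (qofR c0) (qofR d0)) q 3) with (qmul X X)
    by (unfold lin_s, star, cconj, lin, X; qring).
  replace (psum (cconj (lin (qofR c0) (qofR d0))) q 2) with X
    by (unfold cconj, lin, X; qring).
  apply qinv_unique; rewrite <- qmul_assoc; apply qinv_l.
  intros E; destruct (qmul_eq0 _ _ E); contradiction.
Qed.

Lemma star_lin_0 alpha a b : star alpha (lin a b) 0 = qmul (alpha 0%nat) b.
Proof. unfold star; simpl; qring. Qed.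

Lemma star_lin_S alpha a b n :
  star alpha (lin a b) (S n) = qadd (qmul (alpha n) a) (qmul (alpha (S n)) b).
Proof.
  unfold star; cbn [qsum]; rewrite Nat.sub_diag.
  replace (S n - n)%nat with 1%nat by lia.
  assert (Z : forall m, (m <= n)%nat ->
                qsum (fun k => qmul (alpha k) (lin a b (S n - k))) m = q0).
  { induction m as [|m IH]; intros Hm; cbn [qsum]; [reflexivity|].
    rewrite IH by lia; replace (S n - m)%nat with (S (S (n - S m))) by lia.
    simpl; qring. }
  rewrite Z by lia; simpl; qring.
Qed.

Lemma psum_star_lin alpha a b q N :
  psum (star alpha (lin a b)) q (S N)
  = qadd (qmul (psum alpha q (S N)) b) (qmul q (qmul (psum alpha q N) a)).
Proof.
  induction N as [|N IH]; [simpl; rewrite star_lin_0; qring|].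
  transitivity (qadd (psum (star alpha (lin a b)) q (S N))
                     (qmul (qpow q (S N)) (star alpha (lin a b) (S N)))); [reflexivity|].
  rewrite IH, star_lin_S; cbn [psum qpow]; rewrite <- (qpow_comm q N).
  set (P := psum alpha q N); set (Q := qpow q N); clearbody P Q; qring.
Qed.

Lemma series_star_lin alpha a b q L : series_to alpha q L ->
  series_to (star alpha (lin a b)) q (qadd (qmul L b) (qmul q (qmul L a))).
Proof.
  rewrite !series_to_qcv; intros H; apply qcv_S.
  apply (qcv_ext _ _ _ (fun N => eq_sym (psum_star_lin alpha a b q N))).
  apply qcv_add; [apply qcv_mul; [apply qcv_S, H | apply qcv_const]|].
  apply qcv_mul; [apply qcv_const | apply qcv_mul; [exact H | apply qcv_const]].
Qed.

Lemma qinv_lin_real_comm q c0 d0 :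
  qmul q (qinv (qadd (qmul q (qofR c0)) (qofR d0)))
  = qmul (qinv (qadd (qmul q (qofR c0)) (qofR d0))) q.
Proof. unfold qinv; set (k := / qnorm2 _); clearbody k; qring. Qed.

Lemma mobH_Sp11 t u : inSp1 u ->
  inSp11 (qmul (qofR (cosh t)) u) (qmul (qofR (sinh t)) u) (qofR (sinh t)) (qofR (cosh t)).
Proof.
  intros Hu; apply inSp1_norm2 in Hu; pose proof (cosh_sqr_sub_sinh_sqr t) as Hcs.
  unfold qnorm2 in Hu; repeat split; apply quat_ext; simpl; try ring; nra.
Qed.

Lemma mobH_mul_classical_regular f t u : inSp1 u ->
  (forall q, inB q -> f q = qmul (mobH t q) u) ->
  in_classical_Mob f /\ in_regular_Mob f.
Proof.
  intros Hu Hf.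
  set (a := qmul (qofR (cosh t)) u); set (b := qmul (qofR (sinh t)) u).
  set (c := qofR (sinh t)); set (d := qofR (cosh t)).
  assert (HA : inSp11 a b c d) by (apply mobH_Sp11, Hu).
  assert (HF : forall q, inB q -> f q = mobF a b c d q)
    by (intros q Bq; rewrite Hf by exact Bq; apply mobF_mulr).
  assert (Hcd : sinh t * sinh t < cosh t * cosh t)
    by (pose proof (cosh_sqr_sub_sinh_sqr t); lra).
  assert (HX : forall q, inB q -> qadd (qmul q c) d <> q0)
    by (intros q Bq; apply lin_neq0; [unfold c, d, qnorm2; simpl; nra | exact Bq]).
  split; [exists a, b, c, d; split; [exact HA | exact HF]|].
  exists a, b, c, d; split; [exact HA|].
  exists (fun n => qofR ((- sinh t / cosh t) ^ n / cosh t)); split; intros q Bq.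
  - unfold c, d; rewrite lin_sinv_real by exact (HX q Bq).
    apply series_inv_lin_real; assumption.
  - assert (E : mobF a b c d q
                = qadd (qmul (qinv (qadd (qmul q c) d)) b)
                       (qmul q (qmul (qinv (qadd (qmul q c) d)) a))).
    { unfold mobF, c, d; rewrite qmul_assoc, qinv_lin_real_comm.
      set (Y := qinv _); clearbody Y; qring. }
    rewrite HF, E by exact Bq; apply series_star_lin, series_inv_lin_real; assumption.
Qed.

Theorem corollary3p2 :
  forall f : quat -> quat,
    (in_classical_Mob f /\ in_regular_Mob f) <->
    (exists (t : R) (u : quat), inSp1 u /\
       forall q, inB q -> f q = qmul (mobH t q) u).
Proof.
  intros f; split.
  - intros [(a & b & c & d & HA & Hf) (a' & b' & _ & _ & _ & alpha & _ & Hs)].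
    assert (Hs' : forall z, inB z -> series_to _ z (mobF a b c d z))
      by (intros z Bz; rewrite <- Hf by exact Bz; apply Hs, Bz).
    destruct (mobF_regular_real_cd _ _ _ _ _ HA Hs') as [Ec Ed].
    rewrite Ec, Ed in HA.
    destruct (mobF_Sp11_real_cd _ _ _ _ HA) as (t & u & Hu & Htu).
    exists t, u; split; [exact Hu|].
    intros q Bq; rewrite Hf, Ec, Ed by exact Bq; apply Htu.
  - intros (t & u & Hu & Hf); exact (mobH_mul_classical_regular f t u Hu Hf).
Qed.
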